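(* Assume that spacetime is Minkowski in $1+n$ dimensions and that the Nontrivial Poincaré Invariance postulate and the Existence of Classical Momentum postulate (both stated in the context) hold for particles of the type $\mathcal{P}$, which have mass $m>0$. Let $p_{\text{rest}}=(m,0,\ldots,0)^{\text{t}}$ and consider, for any internal degrees of freedom of such a particle with finite-dimensional state space $\mathcal{S}\subset\mathbb{R}^{d+1}$, the maps $R^{\text{st}}_{p_{\text{rest}}}(P(x,\Lambda)):\mathcal{S}\to\mathcal{S}$ describing how the internal state $\zeta$ of the classical-momentum state $Z^{\text{class}}_{p_{\text{rest}},\zeta}$ transforms under $P(x,\Lambda)\in\mathfrak{Poin}$, i.e. $Z^{\text{class}}_{p_{\text{rest}},\zeta}\mapsto Z^{\text{class}}_{\Lambda p_{\text{rest}},\,R^{\text{st}}_{p_{\text{rest}}}(P(x,\Lambda))\zeta}$. Then $R^{\text{st}}_{p_{\text{rest}}}$ restricted to spatial rotations is a representation of $\mathrm{SO}(n)$: $$R^{\text{st}}_{p_{\text{rest}}}(P(\vec{0},O_2))\,R^{\text{st}}_{p_{\text{rest}}}(P(\vec{0},O_1))=R^{\text{st}}_{p_{\text{rest}}}(P(\vec{0},O_2O_1))$$ for all $O_i=\begin{pmatrix}1&0\\0&\tilde O_i\end{pmatrix}$ with $\tilde O_i\in\mathrm{SO}(n)$, $i\in\{1,2\}$.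
   Context: Minkowski spacetime in $1+n$ dimensions has metric $\eta=\mathrm{diag}(-1,1,\ldots,1)$ (units with $c=1$). A Poincaré transformation $P(a,\Lambda)$ acts by $x\mapsto \Lambda x+a$ with $a\in\mathbb{R}^{1+n}$ and $\Lambda^{\text{t}}\eta\Lambda=\eta$; they compose as $P(a',\Lambda')\circ P(a,\Lambda)=P(a'+\Lambda'a,\Lambda'\Lambda)$. $\mathfrak{L}$ denotes the proper orthochronous Lorentz group (Lorentz transformations continuously connected to the identity: rotations and boosts) and $\mathfrak{Poin}=\{P(a,\Lambda):\Lambda\in\mathfrak{L}\}$. General probabilistic theories (GPTs): a finite-dimensional system of dimension $d$ has a closed convex state space $\mathcal{S}=\{(1,\tilde\zeta)^{\text{t}}:\tilde\zeta\in\tilde{\mathcal{S}}\}\subset\mathbb{R}^{d+1}$, a convex set of effects $\mathcal{E}\subseteq\{\varepsilon\in\mathbb{R}^{d+1}:0\le\varepsilon\cdot\zeta\le1\ \forall\zeta\in\mathcal{S}\}$ containing the unit effect $u=(1,0,\ldots,0)^{\text{t}}$ and the zero effect, with outcome probability $\varepsilon(\zeta)=\varepsilon\cdot\zeta$, and a set of allowed linear transformations $\mathcal{S}\to\mathcal{S}$. A continuous-dimensional GPT has sets $\mathscr{S}$ (states), $\mathscr{E}$ (effects, maps $\mathscr{S}\to[0,1]$), $\mathscr{T}$ (maps $\mathscr{S}\to\mathscr{S}$). A GPT is invariant under a group $\mathfrak{G}$ of changes of reference frame if there are representations $\hat{\mathbf{R}}^{\text{st}},\hat{\mathbf{R}}^{\text{ef}}$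 of $\mathfrak{G}$ (identity to identity, $\hat{\mathbf{R}}(G_2)\circ\hat{\mathbf{R}}(G_1)=\hat{\mathbf{R}}(G_2\circ G_1)$) on $\mathscr{S}$ and $\mathscr{E}$ such that under $G\in\mathfrak{G}$ states and effects transform as $Z\mapsto\hat{\mathbf{R}}^{\text{st}}(G)[Z]$, $\hat E\mapsto\hat{\mathbf{R}}^{\text{ef}}(G)[\hat E]$, and outcome probabilities are invariant: $\hat E'[Z']=\hat E[Z]$. It is nontrivially invariant if these representations are not trivial. Particles of the type $\mathcal{P}$: massive particles of mass $m>0$, each described by the same GPT with state/effect/transformation sets $\mathscr{S},\mathscr{E},\mathscr{T}$ (including spacetime degrees of freedom such as momentum), whose internal degrees of freedom are described by a finite-dimensional GPT $(\mathcal{S},\mathcal{E},\mathcal{T})$ of dimension $d$. Nontrivial Poincaré Invariance: the GPT of a particle of type $\mathcal{P}$ is nontrivially invariant under $\mathfrak{Poin}$. Existence of Classical Momentum: with $p_{\text{rest}}=(m,0,\ldots,0)^{\text{t}}$ and $\Pi_{p_{\text{rest}}}=\{\Lambda p_{\text{rest}}:\Lambda\in\mathfrak{L}\}$, there are states $Z^{\text{class}}_{p,\zeta}\in\mathscr{S}$ and effects $\hat E^{\text{class}}_{p,\varepsilon}\in\mathscr{E}$ for all $p\in\Pi_{p_{\text{rest}}}$, $\zeta\in\mathcal{S}$, $\varepsilon\in\mathcal{E}$, with $\hat E^{\text{class}}_{p',\varepsilon}[Z^{\text{class}}_{p,\zeta}]=\delta(p'-p)\,\varepsilon\cdot\zeta$,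 and under $P(x,\Lambda)\in\mathfrak{Poin}$: $\hat{\mathbf{R}}^{\text{st}}(P(x,\Lambda))[Z^{\text{class}}_{p,\zeta}]=Z^{\text{class}}_{\Lambda p,\,R^{\text{st}}_p(P(x,\Lambda))\zeta}$ and $\hat{\mathbf{R}}^{\text{ef}}(P(x,\Lambda))[\hat E^{\text{class}}_{p,\varepsilon}]=\hat E^{\text{class}}_{\Lambda p,\,R^{\text{ef}}_p(P(x,\Lambda))\varepsilon}$ for some maps $R^{\text{st}}_p(P(x,\Lambda)):\mathcal{S}\to\mathcal{S}$, $R^{\text{ef}}_p(P(x,\Lambda)):\mathcal{E}\to\mathcal{E}$. *)

From HB Require Import structures.
From mathcomp Require Import all_boot all_order all_algebra.
From mathcomp Require Import all_classical all_reals all_analysis.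
Unset Printing Implicit Defensive.
Import Order.TTheory GRing.Theory Num.Theory.
Import numFieldNormedType.Exports.
Local Open Scope classical_set_scope.
Local Open Scope ring_scope.

Definition eta {R : realType} (n : nat) : 'M[R]_(n.+1) :=
  \matrix_(i, j) (if i == j then (if i == ord0 then -1 else 1) else 0).

Definition lorentz {R : realType} (n : nat) : set 'M[R]_(n.+1) :=
  [set L | L^T *m eta n *m L = eta n].

(* proper orthochronous Lorentz group: Lorentz transformations continuously
   connected to the identity (connected component of 1 in the Lorentz group) *)
Definition lorentz_po {R : realType} (n : nat) : set 'M[R]_(n.+1) :=
  connected_component (lorentz n) 1%:M.

(* Poincare transformations P(a, L) : x |-> L x + a *)
Definition poin (R : realType) (n : nat) : Type :=
  ('cV[R]_(n.+1) * 'M[R]_(n.+1))%type.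

Definition P {R : realType} {n : nat} (a : 'cV[R]_(n.+1)) (L : 'M[R]_(n.+1))
  : poin R n := (a, L).

Definition pcomp {R : realType} {n : nat} (G2 G1 : poin R n) : poin R n :=
  (G2.1 + G2.2 *m G1.1, G2.2 *m G1.2).

Definition pid {R : realType} {n : nat} : poin R n := (0, 1%:M).

Definition Poin {R : realType} (n : nat) : set (poin R n) :=
  [set G | lorentz_po n G.2].

Definition is_rep_on {R : realType} {n : nat} {T : Type} (X : set T)
  (Rp : poin R n -> T -> T) : Prop :=
  [/\ (forall G x, Poin n G -> X x -> X (Rp G x)),
      (forall x, X x -> Rp pid x = x) &
      (forall G2 G1 x, Poin n G1 -> Poin n G2 -> X x ->
          Rp (pcomp G2 G1) x = Rp G2 (Rp G1 x))].

Definition vdot {R : realType} {d : nat} (e z : 'cV[R]_(d.+1)) : R :=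
  (e^T *m z) ord0 ord0.

Definition convex_vset {R : realType} {d : nat} (A : set 'cV[R]_(d.+1)) :=
  forall x y (t : R), A x -> A y -> 0 <= t -> t <= 1 ->
    A (t *: x + (1 - t) *: y).

Definition unit_effect {R : realType} (d : nat) : 'cV[R]_(d.+1) :=
  \col_i (if i == ord0 then 1 else 0).

(* S : state space (vectors (1, zeta~)), E : effects, T : transformations *)
Definition fin_GPT {R : realType} (d : nat) (S E : set 'cV[R]_(d.+1))
  (T : set 'M[R]_(d.+1)) : Prop :=
  [/\ [/\ closed S, convex_vset S & (forall z, S z -> z ord0 ord0 = 1)],
      [/\ convex_vset E, E (unit_effect d) & E 0],
      (forall e z, E e -> S z -> 0 <= vdot e z <= 1),
      (* standard (reduced) GPT convention: effects separate states *)
      (forall z1 z2, S z1 -> S z2 ->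
         (forall e, E e -> vdot e z1 = vdot e z2) -> z1 = z2) &
      (forall M z, T M -> S z -> S (M *m z))].

(* The continuous GPT of the particle: states Ss in type St, effects Es
   (maps St -> R), transformations Ts.  Nontrivial Poincare invariance: *)
Definition nontriv_poincare_invariant {R : realType} (n : nat) {St : Type}
  (Ss : set St) (Es : set (St -> R))
  (Rst : poin R n -> St -> St) (Ref : poin R n -> (St -> R) -> (St -> R)) :=
  [/\ is_rep_on Ss Rst, is_rep_on Es Ref,
      (forall G Z E, Poin n G -> Ss Z -> Es E -> Ref G E (Rst G Z) = E Z),
      (exists G Z, Poin n G /\ Ss Z /\ Rst G Z <> Z) &
      (exists G E, Poin n G /\ Es E /\ Ref G E <> E)].

Definition p_rest {R : realType} (n : nat) (m : R) : 'cV[R]_(n.+1) :=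
  \col_i (if i == ord0 then m else 0).

Definition mass_shell {R : realType} (n : nat) (m : R) : set 'cV[R]_(n.+1) :=
  [set p | exists L, lorentz_po n L /\ p = L *m p_rest n m].

(* Existence of classical momentum.  [delta] stands for the Dirac delta:
   it vanishes off 0 and is nonzero at 0. *)
Definition classical_momentum {R : realType} (n d : nat) (m : R) {St : Type}
  (Ss : set St) (Es : set (St -> R))
  (Rst : poin R n -> St -> St) (Ref : poin R n -> (St -> R) -> (St -> R))
  (S E : set 'cV[R]_(d.+1)) (delta : 'cV[R]_(n.+1) -> R)
  (Zc : 'cV[R]_(n.+1) -> 'cV[R]_(d.+1) -> St)
  (Ec : 'cV[R]_(n.+1) -> 'cV[R]_(d.+1) -> (St -> R))
  (Rstp Refp : 'cV[R]_(n.+1) -> poin R n -> 'cV[R]_(d.+1) -> 'cV[R]_(d.+1)) :=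
  [/\ (forall p z, mass_shell n m p -> S z -> Ss (Zc p z)),
      (forall p e, mass_shell n m p -> E e -> Es (Ec p e)),
      (forall p p' z e, mass_shell n m p -> mass_shell n m p' -> S z -> E e ->
          Ec p' e (Zc p z) = delta (p' - p) * vdot e z),
      (forall p G z, mass_shell n m p -> Poin n G -> S z ->
          S (Rstp p G z) /\ Rst G (Zc p z) = Zc (G.2 *m p) (Rstp p G z)) &
      (forall p G e, mass_shell n m p -> Poin n G -> E e ->
          E (Refp p G e) /\ Ref G (Ec p e) = Ec (G.2 *m p) (Refp p G e))].

Definition SO {R : realType} (n : nat) : set 'M[R]_n :=
  [set O | O^T *m O = 1%:M /\ \det O = 1].

Definition spatial_rot {R : realType} {n : nat} (Ot : 'M[R]_n) : 'M[R]_(n.+1) :=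
  block_mx (1%:M : 'M[R]_1) 0 0 Ot.

(* Spatial rotations diag(1, O~) fix p_rest, so by the Existence of Classical
   Momentum each of them maps the classical states of momentum p_rest among
   themselves, acting on the internal state through R_p_rest.  Classical
   states with the same momentum are told apart by the classical effects
   (their outcome probabilities are delta(0) eps.zeta), so the composition
   law of the representation of Poin passes to R_p_rest.
   The real work is to show that the rotations are proper orthochronous,
   i.e. that SO(n) lies in the identity component of O(n).  By induction on
   n: a product H_e1 H_w of two Householder reflections moves the first
   column of O to e0, leaving a rotation of one dimension less, and the
   path s |-> H_e1 H_((1-s) e1 + s w) joins it to the identity when the sign
   of w makes <e1, w> nonnegative. *)

From Pilot Require Import Defs.
From HB Require Import structures.
From mathcomp Require Import all_boot all_order all_algebra.
From mathcomp Require Import all_classical all_reals all_analysis.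
From mathcomp Require Import ring lra.
Import Order.TTheory GRing.Theory Num.Theory.
Import numFieldNormedType.Exports.
Local Open Scope classical_set_scope.
Local Open Scope ring_scope.

Section MatrixContinuity.
Context {R : realType} {T : topologicalType} {t : T}.

Lemma continuous_mx_entries m n (f : T -> 'M[R]_(m, n)) :
  (forall i j, {for t, continuous (fun s => f s i j)}) -> {for t, continuous f}.
Proof.
move=> f_cont A /nbhs_ballP [e /= e_gt0 eA].
have : \forall s \near t, forall ij : 'I_m * 'I_n,
    ball (f t ij.1 ij.2) e (f s ij.1 ij.2).
  by apply: filter_forall => ij; exact: (f_cont ij.1 ij.2 _ (nbhsx_ballx _ _ e_gt0)).
by apply: filterS => s fs; apply: eA; split => // i j; exact: (fs (i, j)).
Qed.

Lemma continuous_entry {m n} {f : T -> 'M[R]_(m, n)} i j :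
  {for t, continuous f} -> {for t, continuous (fun s => f s i j)}.
Proof. by move=> f_cont; exact: (continuous_comp f_cont (@coord_continuous R m n i j (f t))). Qed.

Lemma continuous_mulmx {m n p} {f : T -> 'M[R]_(m, n)} {g : T -> 'M[R]_(n, p)} :
  {for t, continuous f} -> {for t, continuous g} ->
  {for t, continuous (fun s => f s *m g s)}.
Proof.
move=> f_cont g_cont; apply: continuous_mx_entries => i j.
rewrite /prop_for /continuous_at mxE; under eq_cvg do rewrite mxE.
by apply: cvg_big => [|l _]; [exact: add_continuous | apply: cvgM; exact: continuous_entry].
Qed.

Lemma continuous_trmx {m n} {f : T -> 'M[R]_(m, n)} :
  {for t, continuous f} -> {for t, continuous (fun s => (f s)^T)}.
Proof.
move=> f_cont; apply: continuous_mx_entries => i j.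
rewrite /prop_for /continuous_at mxE; under eq_cvg do rewrite mxE.
exact: continuous_entry.
Qed.

Lemma continuous_det {n} {f : T -> 'M[R]_n} :
  {for t, continuous f} -> {for t, continuous (fun s => \det (f s))}.
Proof.
move=> f_cont; apply: cvg_big => [|s _]; first exact: add_continuous.
apply: cvgM; first exact: cvg_cst.
by apply: cvg_big => [|i _]; [exact: mul_continuous | exact: continuous_entry].
Qed.

End MatrixContinuity.

Lemma connected_component_image (T U : topologicalType) (A : set T) (B : set U)
    (f : T -> U) x :
  {in connected_component A x, continuous f} -> f @` A `<=` B ->
  f @` connected_component A x `<=` connected_component B (f x).
Proof.
move=> f_cont fAB.
have [Ax|/connected_component_out ->] := pselect (A x); last by rewrite image_set0.
apply: connected_component_max.
- by exists x => //; exact: connected_component_refl.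
- by move=> _ [w /connected_component_sub Aw <-]; apply: fAB; exists w.
- apply: connected_continuous_connected; first exact: component_connected.
  exact: continuous_in_subspaceT.
Qed.

Lemma connected_component1M {R : realType} k (A : set 'M[R]_k) :
  (forall X Y, A X -> A Y -> A (X *m Y)) ->
  forall X Y, connected_component A 1%:M X -> connected_component A 1%:M Y ->
  connected_component A 1%:M (X *m Y).
Proof.
move=> AM X Y AX AY.
rewrite (same_connected_component AY).
have := @connected_component_image _ _ A A (mulmxr Y) 1%:M.
rewrite /= mul1mx; apply; last by exists X.
- move=> Z _; apply: (@continuous_mulmx _ _ Z _ _ _ (fun Z => Z) (fun=> Y)).
  + exact: cvg_id.
  + exact: cst_continuous.
- by move=> _ [Z AZ <-]; apply: AM => //; exact: connected_component_sub AY.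
Qed.

Section OrthogonalGroup.
Context {R : realType}.

Definition Ogroup k : set 'M[R]_k := [set O | O^T *m O = 1%:M].

Definition Ogroup0 k : set 'M[R]_k := connected_component (Ogroup k) 1%:M.

Lemma Ogroup1 {k} : Ogroup k 1%:M.
Proof. by rewrite /Ogroup /= trmx1 mul1mx. Qed.

Lemma OgroupM {k} (A B : 'M[R]_k) :
  Ogroup k A -> Ogroup k B -> Ogroup k (A *m B).
Proof.
rewrite /Ogroup /= => A_orth B_orth.
by rewrite trmx_mul mulmxA -(mulmxA B^T) A_orth mulmx1 B_orth.
Qed.

Lemma Ogroup_tr {k} (A : 'M[R]_k) : Ogroup k A -> Ogroup k A^T.
Proof. by rewrite /Ogroup /= trmxK => /mulmx1C. Qed.

Lemma Ogroup_det {k} (A : 'M[R]_k) : Ogroup k A -> \det A ^+ 2 = 1.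
Proof. by move=> /(congr1 determinant); rewrite det_mulmx det_tr det1. Qed.

Lemma Ogroup0_1 {k} : Ogroup0 k 1%:M.
Proof. exact/connected_component_refl/Ogroup1. Qed.

Lemma Ogroup0_sub {k} : Ogroup0 k `<=` Ogroup k.
Proof. exact: connected_component_sub. Qed.

Lemma Ogroup0_image k l (f : 'M[R]_k -> 'M[R]_l) :
  continuous f -> f @` Ogroup k `<=` Ogroup l -> f 1%:M = 1%:M ->
  f @` Ogroup0 k `<=` Ogroup0 l.
Proof.
by move=> f_cont fO f1; rewrite /Ogroup0 -f1; apply: connected_component_image.
Qed.

Lemma Ogroup0M {k} (A B : 'M[R]_k) :
  Ogroup0 k A -> Ogroup0 k B -> Ogroup0 k (A *m B).
Proof. exact/connected_component1M/OgroupM. Qed.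

Lemma Ogroup0_tr {k} (A : 'M[R]_k) : Ogroup0 k A -> Ogroup0 k A^T.
Proof.
move=> A_O0; apply: (@Ogroup0_image _ _ trmx); last by exists A.
- by move=> X; apply: continuous_trmx; exact: cvg_id.
- by move=> _ [X X_orth <-]; exact: Ogroup_tr.
- exact: trmx1.
Qed.

Lemma Ogroup0_det {k} (A : 'M[R]_k) : Ogroup0 k A -> \det A = 1.
Proof.
move=> A_O0.
have /connected_intervalP detI : connected (determinant @` Ogroup0 k).
  apply: connected_continuous_connected; first exact: component_connected.
  by apply: continuous_subspaceT => X; apply: continuous_det; exact: cvg_id.
have det_sq X : Ogroup0 k X -> \det X ^+ 2 = 1.
  by move=> /Ogroup0_sub; exact: Ogroup_det.
have /eqP := det_sq A A_O0; rewrite sqrf_eq1 => /orP [/eqP //|/eqP detAN1].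
have [X X_O0 detX0] : (determinant @` Ogroup0 k) 0.
  apply: (detI (\det A) 1); [by exists A | by exists 1%:M; [exact: Ogroup0_1 | exact: det1] |].
  by rewrite detAN1; apply/andP; split; lra.
by have := det_sq X X_O0; rewrite detX0 expr0n /= => /eqP; rewrite eq_sym oner_eq0.
Qed.

End OrthogonalGroup.

Section Householder.
Context {R : realType} {N : nat}.
Implicit Types u v w x : 'cV[R]_N.

Definition dot u v : R := (u^T *m v) ord0 ord0.

Definition householder u : 'M[R]_N := 1%:M - (2 / dot u u) *: (u *m u^T).

Lemma dotC u v : dot u v = dot v u.
Proof. by rewrite /dot -[u^T *m v]trmxK trmx_mul trmxK mxE. Qed.

Lemma dotDl u v w : dot (u + v) w = dot u w + dot v w.
Proof. by rewrite /dot linearD /= mulmxDl mxE. Qed.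

Lemma dotZl a u v : dot (a *: u) v = a * dot u v.
Proof. by rewrite /dot linearZ /= -scalemxAl mxE. Qed.

Lemma dotNl u v : dot (- u) v = - dot u v.
Proof. by rewrite -scaleN1r dotZl mulN1r. Qed.

Lemma dotDr u v w : dot u (v + w) = dot u v + dot u w.
Proof. by rewrite dotC dotDl !(dotC u). Qed.

Lemma dotZr a u v : dot u (a *: v) = a * dot u v.
Proof. by rewrite dotC dotZl dotC. Qed.

Lemma dotNr u v : dot u (- v) = - dot u v.
Proof. by rewrite dotC dotNl dotC. Qed.

Lemma dot_ge0 u : 0 <= dot u u.
Proof. by rewrite /dot mxE sumr_ge0 // => i _; rewrite mxE -expr2 sqr_ge0. Qed.

Lemma dot_delta u i : dot u (delta_mx i ord0) = u i ord0.
Proof. by rewrite /dot -colE !mxE. Qed.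

Lemma householderE u x : householder u *m x = x - (2 / dot u u * dot u x) *: u.
Proof.
rewrite /householder mulmxBl mul1mx -scalemxAl -mulmxA.
by rewrite [u^T *m x]mx11_scalar mul_mx_scalar scalerA.
Qed.

Lemma householderN u : householder (- u) = householder u.
Proof. by rewrite /householder dotNl dotNr opprK linearN /= mulNmx mulmxN opprK. Qed.

Lemma householder_tr u : (householder u)^T = householder u.
Proof. by rewrite /householder linearB /= linearZ /= trmx1 trmx_mul trmxK. Qed.

Lemma householderK u : dot u u != 0 -> householder u *m householder u = 1%:M.
Proof.
move=> uu0; rewrite {1}/householder mulmxBl mul1mx -scalemxAl -mulmxA.
have -> : u^T *m householder u = - u^T.
  rewrite /householder mulmxBr mulmx1 -scalemxAr mulmxA [u^T *m u]mx11_scalar.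
  by rewrite mul_scalar_mx scalerA -/(dot u u) divfK // scaler_nat mulr2n opprD addrA subrr add0r.
by rewrite mulmxN scalerN /householder opprK subrK.
Qed.

Lemma householder_Ogroup u : dot u u != 0 -> Ogroup N (householder u).
Proof. by move=> uu0; rewrite /Ogroup /= householder_tr householderK. Qed.

Lemma Ogroup_dot (O : 'M[R]_N) u v : Ogroup N O -> dot (O *m u) (O *m v) = dot u v.
Proof. by move=> O_orth; rewrite /dot trmx_mul mulmxA -(mulmxA u^T) O_orth mulmx1. Qed.

Lemma householder_swap v e :
  dot e e = dot v v -> dot v e != dot v v -> householder (v - e) *m v = e.
Proof.
move=> ee_vv ve_neq; rewrite householderE.
have -> : dot (v - e) (v - e) = 2 * (dot v v - dot v e).
  by rewrite !(dotDl, dotDr, dotNl, dotNr) opprK ee_vv (dotC e v); ring.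
have -> : dot (v - e) v = dot v v - dot v e by rewrite dotDl dotNl (dotC e).
rewrite mulrAC -mulf_div divff ?mulr1 ?divff ?pnatr_eq0 //.
  by rewrite scale1r opprB addrC subrK.
by rewrite subr_eq0 eq_sym.
Qed.

End Householder.

Section Reflections.
Context {R : realType}.

Lemma continuous_householder {T : topologicalType} {N} {u : T -> 'cV[R]_N} {t} :
  dot (u t) (u t) != 0 -> {for t, continuous u} ->
  {for t, continuous (fun s => householder (u s))}.
Proof.
move=> uu0 cu.
have cuT := continuous_trmx cu.
have cuu := continuous_entry ord0 ord0 (continuous_mulmx cuT cu).
have cP : {for t, continuous (fun s => u s *m (u s)^T)} := continuous_mulmx cu cuT.
apply: cvgB; first exact: cvg_cst.
by apply: cvgZ cP; apply: cvgM; [exact: cvg_cst | exact: cvgV].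
Qed.

Lemma segment_dot_neq0 N (e w : 'cV[R]_N) s : 0 < dot e e -> 0 < dot w w ->
  0 <= dot e w -> 0 <= s <= 1 ->
  dot ((1 - s) *: e + s *: w) ((1 - s) *: e + s *: w) != 0.
Proof.
move=> ee_gt0 ww_gt0 ew_ge0 /andP [s_ge0 s_le1].
rewrite !(dotDl, dotDr, dotZl, dotZr) (dotC w e).
have [->|s_neq0] := eqVneq s 0; first by rewrite subr0 !mul1r !mul0r !addr0 gt_eqF.
have s_gt0 : 0 < s by rewrite lt_def s_neq0.
have r_ge0 : 0 <= 1 - s by rewrite subr_ge0.
have : 0 <= (1 - s) * ((1 - s) * dot e e) by rewrite !mulr_ge0 // ltW.
have : 0 <= (1 - s) * (s * dot e w) by rewrite !mulr_ge0 // ltW.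
have : 0 <= s * ((1 - s) * dot e w) by rewrite !mulr_ge0 // ltW.
have : 0 < s * (s * dot w w) by rewrite !mulr_gt0.
move=> *; apply: lt0r_neq0; lra.
Qed.

Lemma householder_pair_Ogroup0 N (e w : 'cV[R]_N) :
  0 < dot e e -> 0 < dot w w -> 0 <= dot e w ->
  Ogroup0 N (householder e *m householder w).
Proof.
move=> ee_gt0 ww_gt0 ew_ge0.
pose u s := (1 - s) *: e + s *: w.
have uu_neq0 s : 0 <= s <= 1 -> dot (u s) (u s) != 0.
  exact: segment_dot_neq0.
have cu : continuous u.
  move=> s; apply: cvgD; apply: cvgZr_tmp; last exact: cvg_id.
  by apply: cvgB; [exact: cvg_cst | exact: cvg_id].
have I01 : connected_component `[0 : R, 1]%classic 0 = `[0 : R, 1]%classic.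
  apply: connected_component_id; last exact: segment_connected.
  by rewrite /= in_itv /= lexx ler01.
pose g s := householder e *m householder (u s).
have := @connected_component_image _ _ `[0 : R, 1]%classic (Ogroup N) g 0.
rewrite /g /u subr0 scale1r scale0r addr0 householderK ?gt_eqF // I01.
have -> : householder e *m householder w = g 1.
  by rewrite /g /u subrr scale0r add0r scale1r.
apply; last by exists 1 => //=; rewrite in_itv /= lexx ler01.
- move=> s; rewrite inE /= in_itv /= => s01.
  exact: continuous_mulmx (@cst_continuous _ _ (householder e) s)
    (continuous_householder (uu_neq0 s s01) (cu s)).
- move=> _ [s /= /[!in_itv] /= s01 <-].
  by apply: OgroupM; apply: householder_Ogroup; [rewrite gt_eqF | exact: uu_neq0].
Qed.



Lemma unit_col_delta0 k (c : 'cV[R]_k.+1) :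
  dot c c = 1 -> c ord0 ord0 = 1 -> c = delta_mx ord0 ord0.
Proof.
move=> c_unit c0; apply/colP => i; rewrite mxE andbT.
case: eqP => [->//|/eqP i_neq0].
have sq_ge0 l : 0 <= c^T ord0 l * c l ord0 by rewrite mxE -expr2 sqr_ge0.
have rest0 : \sum_(l | l != ord0) c^T ord0 l * c l ord0 = 0.
  move: c_unit; rewrite /dot mxE (bigD1 ord0) //= !mxE c0 mulr1.
  by move=> /(canRL (addKr 1)); rewrite addNr.
have := psumr_eq0P (fun l _ => sq_ge0 l) rest0 i_neq0.
by rewrite mxE => /eqP; rewrite mulf_eq0 orbb => /eqP.
Qed.

Lemma Ogroup0_first_column {j} (O : 'M[R]_j.+2) :
  Ogroup _ O -> exists2 Q, Ogroup0 _ Q & (Q *m O) ord0 ord0 = 1.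
Proof.
move=> O_orth.
have [corner1|corner_neq1] := eqVneq (O ord0 ord0) 1.
  by exists 1%:M; [exact: Ogroup0_1 | rewrite mul1mx].
pose v := col ord0 O.
pose e0 : 'cV[R]_j.+2 := delta_mx ord0 ord0.
pose e1 : 'cV[R]_j.+2 := delta_mx (lift ord0 ord0) ord0.
have e0_unit : dot e0 e0 = 1 by rewrite dot_delta mxE.
have v_unit : dot v v = 1 by rewrite /v colE Ogroup_dot.
have ve0 : dot v e0 = O ord0 ord0 by rewrite dot_delta mxE.
have e1e0 : dot e1 e0 = 0 by rewrite dot_delta mxE.
have e1_unit : dot e1 e1 = 1 by rewrite dot_delta mxE !eqxx.
pose w := v - e0.
have Hwv : householder w *m v = e0.
  by apply: householder_swap; rewrite ?e0_unit ?v_unit ?ve0.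
have ww_gt0 : 0 < dot w w.
  rewrite lt_def dot_ge0 andbT; apply: contraNneq corner_neq1 => ww0.
  move: ww0; rewrite !(dotDl, dotDr, dotNl, dotNr) v_unit e0_unit ve0 (dotC e0) ve0.
  lra.
have He1 : householder e1 *m e0 = e0 by rewrite householderE e1e0 mulr0 scale0r subr0.
have [Q Q_O0 Qv] : exists2 Q, Ogroup0 _ Q & Q *m v = e0.
  have e1_gt0 : 0 < dot e1 e1 by rewrite e1_unit ltr01.
  have [e1w_ge0|e1w_lt0] := leP 0 (dot e1 w).
    exists (householder e1 *m householder w); first exact: householder_pair_Ogroup0.
    by rewrite -mulmxA Hwv He1.
  exists (householder e1 *m householder (- w)).
    by apply: householder_pair_Ogroup0; rewrite ?dotNl ?dotNr ?opprK ?oppr_ge0 ?ltW.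
  by rewrite householderN -mulmxA Hwv He1.
exists Q => //.
have := congr1 (fun c : 'cV[R]_j.+2 => c ord0 ord0) Qv.
by rewrite /v colE mulmxA -colE !mxE.
Qed.

End Reflections.

Section SpatialRotations.
Context {R : realType}.

Lemma spatial_rot1 k : spatial_rot (1%:M : 'M[R]_k) = 1%:M.
Proof. by rewrite /spatial_rot -scalar_mx_block. Qed.

Lemma spatial_rotM k (X Y : 'M[R]_k) : spatial_rot X *m spatial_rot Y = spatial_rot (X *m Y).
Proof. by rewrite /spatial_rot (@mulmx_block _ 1 k 1 k 1 k) !mul0mx !mulmx0 !mul1mx !addr0 !add0r. Qed.

Lemma tr_spatial_rot k (X : 'M[R]_k) : (spatial_rot X)^T = spatial_rot X^T.
Proof. by rewrite /spatial_rot (@tr_block_mx _ 1 k 1 k) !trmx0 trmx1. Qed.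

Lemma spatial_rot_inj k : injective (@spatial_rot R k).
Proof. by move=> X Y /(congr1 (@drsubmx _ 1 k 1 k)); rewrite !block_mxKdr. Qed.

Lemma Ogroup_spatial_rot k (X : 'M[R]_k) : Ogroup k.+1 (spatial_rot X) <-> Ogroup k X.
Proof.
rewrite /Ogroup /= tr_spatial_rot spatial_rotM -spatial_rot1.
by split=> [/spatial_rot_inj|->].
Qed.

Lemma det_spatial_rot k (X : 'M[R]_k) : \det (spatial_rot X) = \det X.
Proof. by rewrite /spatial_rot (@det_ublock _ 1 k) det1 mul1r. Qed.

Lemma continuous_spatial_rot k : continuous (@spatial_rot R k).
Proof.
move=> X A /nbhs_ballP [e /= e_gt0 eA]; apply/nbhs_ballP; exists e => //= Y [_ XY].
apply: eA; split => // i j; rewrite /spatial_rot /block_mx !mxE.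
case: (@fintype.split 1 k i) => i'; rewrite !mxE; case: (@fintype.split 1 k j) => j';
  rewrite ?mxE //=; first [exact: XY | exact: ballxx].
Qed.

Lemma Ogroup0_spatial_rot k (X : 'M[R]_k) : Ogroup0 k X -> Ogroup0 k.+1 (spatial_rot X).
Proof.
move=> X_O0; apply: (@Ogroup0_image _ k k.+1 spatial_rot); last by exists X.
- exact: continuous_spatial_rot.
- by move=> _ [Y Y_O <-]; apply/Ogroup_spatial_rot.
- exact: spatial_rot1.
Qed.

Lemma Ogroup_corner1 {k} (M : 'M[R]_k.+1) :
  Ogroup _ M -> M ord0 ord0 = 1 -> M = spatial_rot (drsubmx (M : 'M[R]_(1 + k))).
Proof.
move=> M_orth M00.
have col0 (A : 'M[R]_k.+1) : Ogroup _ A -> A ord0 ord0 = 1 -> col ord0 A = delta_mx ord0 ord0.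
  move=> A_orth A00; apply: unit_col_delta0; last by rewrite mxE.
  by rewrite colE Ogroup_dot // dot_delta mxE.
have Mc := col0 M M_orth M00.
have Mr : col ord0 M^T = delta_mx ord0 ord0 by apply: col0; rewrite ?mxE //; exact: Ogroup_tr.
rewrite -[M in LHS](@submxK _ 1 k 1 k) /spatial_rot.
have l0 : lshift k (0 : 'I_1) = ord0 by exact: val_inj.
f_equal; apply/matrixP => i j; rewrite !ord1 !mxE ?l0.
- by rewrite M00.
- have := congr1 (fun c : 'cV[R]_k.+1 => c (rshift 1 j) ord0) Mr.
  by rewrite !mxE => ->.
- have := congr1 (fun c : 'cV[R]_k.+1 => c (rshift 1 i) ord0) Mc.
  by rewrite !mxE => ->.
Qed.

Lemma SO_Ogroup0 k (A : 'M[R]_k) : Ogroup k A -> \det A = 1 -> Ogroup0 k A.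
Proof.
elim: k A => [|k IHk] A A_orth detA.
  by rewrite [A]flatmx0 -(flatmx0 1%:M); exact: Ogroup0_1.
case: k IHk A A_orth detA => [|j] IHk A A_orth detA.
  by rewrite [A]mx11_scalar -det_mx11 detA; exact: Ogroup0_1.
have [Q Q_O0 QA00] := Ogroup0_first_column A A_orth.
have QA_orth : Ogroup _ (Q *m A) by apply: OgroupM => //; exact: Ogroup0_sub.
have QA_rot := Ogroup_corner1 _ QA_orth QA00.
have -> : A = Q^T *m (Q *m A) by rewrite mulmxA (Ogroup0_sub _ Q_O0) mul1mx.
apply: Ogroup0M; first exact: Ogroup0_tr.
rewrite QA_rot; apply: Ogroup0_spatial_rot; apply: IHk.
  by apply/Ogroup_spatial_rot; rewrite -QA_rot.
by rewrite -det_spatial_rot -QA_rot det_mulmx (Ogroup0_det _ Q_O0) detA mulr1.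
Qed.

End SpatialRotations.

Section Lorentz.
Context {R : realType} {n : nat}.

Lemma eta_block : Defs.eta n = block_mx (-1)%:M 0 0 1%:M :> 'M[R]_(1 + n).
Proof.
apply/matrixP => i j.
case: (@split_ordP 1 n i) => i' ->; case: (@split_ordP 1 n j) => j' ->;
  rewrite ?(block_mxEul, block_mxEur, block_mxEdl, block_mxEdr) !mxE ?ord1 //=.
by rewrite (inj_eq (@rshift_inj 1 n)); case: eqP.
Qed.

Lemma p_rest_block (m : R) : p_rest n m = col_mx m%:M 0 :> 'cV[R]_(1 + n).
Proof.
apply/colP => i.
case: (@split_ordP 1 n i) => i' ->; rewrite ?(col_mxEu, col_mxEd) !mxE ?ord1 //=.
Qed.

Lemma spatial_rot_p_rest (X : 'M[R]_n) m : spatial_rot X *m p_rest n m = p_rest n m.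
Proof.
by rewrite p_rest_block /spatial_rot (@mul_block_col _ 1 n 1 n) !mul0mx mulmx0 mul1mx addr0 add0r.
Qed.

Lemma lorentz1 : lorentz n (1%:M : 'M[R]_n.+1).
Proof. by rewrite /lorentz /= trmx1 mul1mx mulmx1. Qed.

Lemma lorentzM (L1 L2 : 'M[R]_n.+1) : lorentz n L1 -> lorentz n L2 -> lorentz n (L1 *m L2).
Proof.
rewrite /lorentz /= => L1_lor L2_lor.
by rewrite trmx_mul !mulmxA -(mulmxA L2^T) -(mulmxA L2^T) L1_lor L2_lor.
Qed.

Lemma lorentz_spatial_rot (X : 'M[R]_n) : Ogroup n X -> lorentz n (spatial_rot X).
Proof.
rewrite /lorentz /= eta_block tr_spatial_rot /spatial_rot => X_orth.
rewrite !(@mulmx_block _ 1 n 1 n 1 n) !mul0mx !mulmx0 !mul1mx !mulmx1 !addr0 !add0r.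
by rewrite mul0mx X_orth.
Qed.

Lemma lorentz_po_spatial_rot (X : 'M[R]_n) : SO n X -> lorentz_po n (spatial_rot X).
Proof.
move=> [X_orth detX].
have := @connected_component_image _ _ (@Ogroup R n) (lorentz n) spatial_rot 1%:M.
rewrite spatial_rot1; apply; last by exists X => //; exact: SO_Ogroup0.
- by move=> Y _; exact: continuous_spatial_rot.
- by move=> _ [Y Y_orth <-]; exact: lorentz_spatial_rot.
Qed.

Lemma lorentz_poM (L1 L2 : 'M[R]_n.+1) :
  lorentz_po n L1 -> lorentz_po n L2 -> lorentz_po n (L1 *m L2).
Proof. exact/connected_component1M/lorentzM. Qed.

Lemma PoinM {G1 G2 : poin R n} :
  Poin n G1 -> Poin n G2 -> Poin n (Defs.pcomp G2 G1).
Proof. by move=> G1_Poin G2_Poin; exact: lorentz_poM. Qed.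

End Lorentz.

Section ClassicalMomentum.
Context {R : realType} {n d : nat} {m : R} {St : Type}.
Context {Ss : set St} {Es : set (St -> R)}.
Context {Rst : poin R n -> St -> St} {Ref : poin R n -> (St -> R) -> (St -> R)}.
Context {S E : set 'cV[R]_(d.+1)} {delta : 'cV[R]_(n.+1) -> R}.
Context {Zc : 'cV[R]_(n.+1) -> 'cV[R]_(d.+1) -> St}.
Context {Ec : 'cV[R]_(n.+1) -> 'cV[R]_(d.+1) -> (St -> R)}.
Context {Rstp Refp : 'cV[R]_(n.+1) -> poin R n -> 'cV[R]_(d.+1) -> 'cV[R]_(d.+1)}.
Hypothesis delta0 : delta 0 <> 0.
Hypothesis effects_separate : forall z1 z2, S z1 -> S z2 ->
  (forall e, E e -> vdot e z1 = vdot e z2) -> z1 = z2.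
Hypothesis Rst_rep : is_rep_on Ss Rst.
Hypothesis hCM : classical_momentum n d m Ss Es Rst Ref S E delta Zc Ec Rstp Refp.

Lemma Zc_inj p z1 z2 : mass_shell n m p -> S z1 -> S z2 -> Zc p z1 = Zc p z2 -> z1 = z2.
Proof.
case: hCM => _ _ Ec_Zc _ _ p_shell Sz1 Sz2 Zc12.
apply: effects_separate => // e Ee; apply/(mulfI (introN eqP delta0)).
by rewrite -(subrr p) -!Ec_Zc // Zc12.
Qed.

Lemma Rstp_stabilizerM p G1 G2 z : mass_shell n m p -> Poin n G1 -> Poin n G2 ->
  G1.2 *m p = p -> G2.2 *m p = p -> S z ->
  Rstp p G2 (Rstp p G1 z) = Rstp p (Defs.pcomp G2 G1) z.
Proof.
move=> p_shell G1_Poin G2_Poin G1p G2p Sz.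
case: hCM => Zc_Ss _ _ Rst_Zc _; case: Rst_rep => _ _ RstM.
have G21_Poin := PoinM G1_Poin G2_Poin.
have [Sz1 Rst1] := Rst_Zc p G1 z p_shell G1_Poin Sz.
have [Sz2 Rst2] := Rst_Zc p G2 _ p_shell G2_Poin Sz1.
have [Sz21 Rst21] := Rst_Zc p (Defs.pcomp G2 G1) z p_shell G21_Poin Sz.
apply: (Zc_inj _ _ _ p_shell) => //.
rewrite G1p in Rst1; rewrite G2p in Rst2; rewrite /= -mulmxA G1p G2p in Rst21.
by rewrite -Rst2 -Rst21 -Rst1 RstM //; exact: Zc_Ss.
Qed.

End ClassicalMomentum.
Theorem lemma1 (R : realType) (n d : nat) (m : R) (hm : 0 < m)
  (St : Type) (Ss : set St) (Es : set (St -> R)) (Ts : set (St -> St))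
  (Rst : poin R n -> St -> St) (Ref : poin R n -> (St -> R) -> (St -> R))
  (S E : set 'cV[R]_(d.+1)) (T : set 'M[R]_(d.+1))
  (delta : 'cV[R]_(n.+1) -> R)
  (hdelta0 : delta 0 <> 0) (hdelta : forall v : 'cV[R]_(n.+1), v <> 0 -> delta v = 0)
  (Zc : 'cV[R]_(n.+1) -> 'cV[R]_(d.+1) -> St)
  (Ec : 'cV[R]_(n.+1) -> 'cV[R]_(d.+1) -> (St -> R))
  (Rstp Refp : 'cV[R]_(n.+1) -> poin R n -> 'cV[R]_(d.+1) -> 'cV[R]_(d.+1))
  (hTs : forall t Z, Ts t -> Ss Z -> Ss (t Z))
  (hGPT : fin_GPT d S E T)
  (hPoin : nontriv_poincare_invariant n Ss Es Rst Ref)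
  (hCM : classical_momentum n d m Ss Es Rst Ref S E delta Zc Ec Rstp Refp) :
  forall O1 O2 : 'M[R]_n, SO n O1 -> SO n O2 ->
  forall z, S z ->
    Rstp (p_rest n m) (P 0 (spatial_rot O2)) (Rstp (p_rest n m) (P 0 (spatial_rot O1)) z)
    = Rstp (p_rest n m) (P 0 (spatial_rot O2 *m spatial_rot O1)) z.
Proof.
move=> O1 O2 SO1 SO2 z Sz.
case: hGPT => _ _ _ effects_separate _; case: hPoin => Rst_rep _ _ _ _.
have rot_Poin O : SO n O -> Poin n (P 0 (spatial_rot O)) := @lorentz_po_spatial_rot R n O.
have p_shell : mass_shell n m (p_rest n m).
  by exists 1%:M; split; [exact/connected_component_refl/lorentz1 | rewrite mul1mx].
rewrite (Rstp_stabilizerM hdelta0 effects_separate Rst_rep hCM _ _ _ _ p_shell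
  (rot_Poin _ SO1) (rot_Poin _ SO2)) ?spatial_rot_p_rest //.
by rewrite /Defs.pcomp /= mulmx0 addr0.
Qed.
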